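(* Let $a,b\in\mathbb{R}$ satisfy $\frac13<a-b<\frac4{\pi^2}$ and $\frac12<a\le\frac2\pi-b$. Suppose moreover that $16ab(b-a)+(a+b)^2>0$ and that \[ x_2=\frac{(a+b)(2b-2a+1)+\sqrt{16ab(b-a)+(a+b)^2}}{2(a-b)^2}\in(0,1). \] Then for all $x\in(0,1)$, \[ \arccos x\ge \frac{(1+x_2)^{b+1/2}(1-x_2)^{1/2-a}}{a+b+(a-b)x_2}\cdot\frac{(1-x)^a}{(1+x)^b}. \]
   Context: $\arccos$ denotes the principal inverse cosine with values in $[0,\pi]$. *)

From Stdlib Require Export Reals.
Open Scope R_scope.

Definition x2 (a b : R) : R :=
  ((a + b) * (2 * b - 2 * a + 1) + sqrt (16 * a * b * (b - a) + (a + b) ^ 2))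
  / (2 * (a - b) ^ 2).

(* Put w(t) = a + b + (a - b) t, E(t) = (1 + t)^b / (1 - t)^a and
     F(t) = acos t * E(t),   g(t) = acos t - sqrt(1 - t^2) / w(t),
     H(t) = ln ((1 + t)^(b + 1/2) (1 - t)^(1/2 - a) / w(t)),
   so that exp H = E sqrt(1 - t^2) / w and F = exp H + E g.  The claim is
   F(x) >= exp (H x2) on (0, 1).  The derivatives are
     g' = - q / (sqrt(1 - t^2) w^2),  H' = q / ((1 - t^2) w),
     F' = E w g / (1 - t^2),
   where q is a quadratic with roots x1 < x2.  Hence g decreases on [0, x1],
   increases on [x1, x2] and decreases on [x2, 1), while H attains its minimum
   over [x1, 1) at x2.  Since g(0) = pi/2 - 1/(a + b) <= 0 we get g <= 0 on
   [0, x1], and since g -> 0 at 1 we get g >= 0 on [x2, 1).  Where g(x) >= 0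
   (with x >= x1) the bound follows from F >= exp H; otherwise g vanishes at
   some xs between x and x2, F decreases on [x, xs], and F(x) >= F(xs) =
   exp (H xs) >= exp (H x2).  The file first proves some general calculus
   facts, then develops the argument in a section over (a, b), and finally
   translates the statement (written with Rpower) into this form. *)

From Stdlib Require Import Reals Lra Psatz Ranalysis5.
From Coquelicot Require Import Coquelicot.
Open Scope R_scope.

Lemma nondecreasing_of_deriv f f' u v :
  u <= v -> (forall c, u <= c <= v -> derivable_pt_lim f c (f' c)) ->
  (forall c, u <= c <= v -> 0 <= f' c) -> f u <= f v.
Proof.
  intros Huv Hder Hsign.
  destruct (Req_dec u v) as [<- | Hne]; [lra |].
  destruct (MVT_cor2 f f' u v ltac:(lra) Hder) as [c [Hmvt Hc]].
  pose proof (Hsign c ltac:(lra)). nra.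
Qed.

Lemma nonincreasing_of_deriv f f' u v :
  u <= v -> (forall c, u <= c <= v -> derivable_pt_lim f c (f' c)) ->
  (forall c, u <= c <= v -> f' c <= 0) -> f v <= f u.
Proof.
  intros Huv Hder Hsign.
  destruct (Req_dec u v) as [<- | Hne]; [lra |].
  destruct (MVT_cor2 f f' u v ltac:(lra) Hder) as [c [Hmvt Hc]].
  pose proof (Hsign c ltac:(lra)). nra.
Qed.

Lemma zero_between f u v :
  u <= v -> (forall c, u <= c <= v -> continuity_pt f c) ->
  f u <= 0 -> 0 <= f v -> exists z, u <= z <= v /\ f z = 0.
Proof.
  intros Huv Hcont Hu Hv.
  destruct (Req_dec (f u) 0) as [Hu0 | Hu0]; [exists u; split; [lra | easy] |].
  destruct (Req_dec (f v) 0) as [Hv0 | Hv0]; [exists v; split; [lra | easy] |].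
  destruct (Req_dec u v) as [-> | Hne]; [lra |].
  destruct (IVT_interv f u v Hcont ltac:(lra) ltac:(lra) ltac:(lra)) as [z Hz].
  now exists z.
Qed.

Lemma exp_nondecreasing x y : x <= y -> exp x <= exp y.
Proof. intros [Hlt | ->]; [left; now apply exp_increasing | lra]. Qed.

Definition sqrt_1m (t : R) : R := sqrt (1 - t * t).

Lemma sqrt_1m_pos t : -1 < t < 1 -> 0 < sqrt_1m t.
Proof. intros; apply sqrt_lt_R0; nra. Qed.

Lemma sqrt_1m_sq t : -1 < t < 1 -> sqrt_1m t * sqrt_1m t = 1 - t * t.
Proof. intros; apply sqrt_sqrt; nra. Qed.

Lemma div_nonneg n d : 0 < d -> 0 <= n -> 0 <= n / d.
Proof. intros Hd Hn. pose proof (Rinv_0_lt_compat d Hd). unfold Rdiv. nra. Qed.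

Lemma div_nonpos n d : 0 < d -> n <= 0 -> n / d <= 0.
Proof. intros Hd Hn. pose proof (Rinv_0_lt_compat d Hd). unfold Rdiv. nra. Qed.

Lemma deriv_acos t : -1 < t < 1 -> derivable_pt_lim acos t (- 1 / sqrt_1m t).
Proof.
  intros Ht. apply derive_pt_eq_1 with (derivable_pt_acos t Ht).
  now rewrite derive_pt_acos.
Qed.

Section Bound.
Variables a b : R.
Hypothesis b_pos : 0 < b.
Hypothesis b_lt_a : b < a.

Definition w (t : R) : R := a + b + (a - b) * t.
Definition g (t : R) : R := acos t - sqrt_1m t / w t.
Definition E (t : R) : R := exp (b * ln (1 + t) - a * ln (1 - t)).
Definition F (t : R) : R := acos t * E t.
Definition H (t : R) : R := (b + 1/2) * ln (1 + t) + (1/2 - a) * ln (1 - t) - ln (w t).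
(* The common numerator of g' and H'. *)
Definition q (t : R) : R :=
  (a - b)^2 * t^2 + (a + b) * (2 * (a - b) - 1) * t + (a + b)^2 - (a - b).

Lemma w_pos t : 0 <= t -> 0 < w t.
Proof. intros; unfold w; nra. Qed.

Lemma E_pos t : 0 < E t.
Proof. apply exp_pos. Qed.

Lemma deriv_g t : 0 <= t < 1 ->
  derivable_pt_lim g t (- q t / (sqrt_1m t * w t ^ 2)).
Proof.
  intros Ht. pose proof (w_pos t (proj1 Ht)) as Hw.
  assert (Hs : 0 < sqrt_1m t) by (apply sqrt_1m_pos; lra).
  assert (Hss : sqrt_1m t * sqrt_1m t = 1 - t * t) by (apply sqrt_1m_sq; lra).
  assert (Hquot : derivable_pt_lim (fun t => sqrt_1m t / w t) t
             (- t / sqrt_1m t / w t - sqrt_1m t * (a - b) / w t ^ 2)).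
  { apply is_derive_Reals. unfold sqrt_1m, w. auto_derive.
    - repeat split; nra.
    - change (1 + - (t * t)) with (1 - t * t). fold (sqrt_1m t) (w t).
      field. lra. }
  replace (q t) with (w t * w t - t * w t - sqrt_1m t * sqrt_1m t * (a - b))
    by (rewrite Hss; unfold q, w; ring).
  replace (- _ / _) with (- 1 / sqrt_1m t - (- t / sqrt_1m t / w t - sqrt_1m t * (a - b) / w t ^ 2))
    by (field; lra).
  apply (derivable_pt_lim_minus acos (fun t => sqrt_1m t / w t)); [apply deriv_acos; lra | exact Hquot].
Qed.

Lemma deriv_H t : 0 <= t < 1 ->
  derivable_pt_lim H t (q t / ((1 - t * t) * w t)).
Proof.
  intros Ht. pose proof (w_pos t (proj1 Ht)) as Hw.
  apply is_derive_Reals. unfold H, w in *. auto_derive.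
  - repeat split; lra.
  - unfold q. field. repeat split; nra.
Qed.

Lemma deriv_F t : 0 <= t < 1 ->
  derivable_pt_lim F t (E t * w t * g t / (1 - t * t)).
Proof.
  intros Ht. pose proof (w_pos t (proj1 Ht)) as Hw.
  assert (Hs : 0 < sqrt_1m t) by (apply sqrt_1m_pos; lra).
  assert (Hss : sqrt_1m t * sqrt_1m t = 1 - t * t) by (apply sqrt_1m_sq; lra).
  assert (HE : derivable_pt_lim E t (E t * w t / (1 - t * t))).
  { apply is_derive_Reals. unfold E at 1. auto_derive.
    - repeat split; lra.
    - change RinvImpl.Rinv with Rinv. change (exp _) with (E t).
      unfold w. field. repeat split; nra. }
  replace (E t * w t * g t / (1 - t * t))
    with (- 1 / sqrt_1m t * E t + acos t * (E t * w t / (1 - t * t))).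
  - apply (derivable_pt_lim_mult acos E); [apply deriv_acos; lra | exact HE].
  - unfold g. rewrite <- Hss. field. lra.
Qed.

Definition disc := 16 * a * b * (b - a) + (a + b) ^ 2.
Definition x1 := ((a + b) * (2 * b - 2 * a + 1) - sqrt disc) / (2 * (a - b) ^ 2).

Hypothesis disc_pos : 0 < disc.

Lemma q_factor t : q t = (a - b) ^ 2 * (t - x1) * (t - x2 a b).
Proof.
  unfold q, x1, x2. fold disc.
  field_simplify_eq; [| nra].
  rewrite pow2_sqrt by lra. unfold disc. ring.
Qed.

Lemma x1_lt_x2 : x1 < x2 a b.
Proof.
  unfold x1, x2. fold disc. pose proof (sqrt_lt_R0 _ disc_pos).
  apply Rmult_lt_compat_r; [apply Rinv_0_lt_compat; nra | lra].
Qed.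

Lemma q_nonneg_outside t : t <= x1 \/ x2 a b <= t -> 0 <= q t.
Proof.
  intros Ht. rewrite q_factor, Rmult_assoc. pose proof x1_lt_x2.
  apply Rmult_le_pos; [nra | destruct Ht; nra].
Qed.

Lemma q_nonpos_between t : x1 <= t <= x2 a b -> q t <= 0.
Proof.
  intros Ht. rewrite q_factor, Rmult_assoc.
  assert (Hprod : (t - x1) * (t - x2 a b) <= 0) by nra.
  assert (0 < (a - b) ^ 2) by nra. nra.
Qed.

Hypothesis x2_in : 0 < x2 a b < 1.

Lemma g_nonincreasing_below u v : 0 <= u <= v -> v <= x1 -> g v <= g u.
Proof.
  intros Huv Hv. pose proof x1_lt_x2.
  apply nonincreasing_of_deriv with (fun c => - q c / (sqrt_1m c * w c ^ 2)); [lra | |].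
  - intros c Hc; apply deriv_g; lra.
  - intros c Hc. apply div_nonpos.
    + apply Rmult_lt_0_compat; [apply sqrt_1m_pos | apply pow_lt, w_pos]; lra.
    + pose proof (q_nonneg_outside c ltac:(lra)); lra.
Qed.

Lemma g_nondecreasing_between u v : 0 <= u -> x1 <= u <= v -> v <= x2 a b -> g u <= g v.
Proof.
  intros Hu Huv Hv.
  apply nondecreasing_of_deriv with (fun c => - q c / (sqrt_1m c * w c ^ 2)); [lra | |].
  - intros c Hc; apply deriv_g; lra.
  - intros c Hc. apply div_nonneg.
    + apply Rmult_lt_0_compat; [apply sqrt_1m_pos | apply pow_lt, w_pos]; lra.
    + pose proof (q_nonpos_between c ltac:(lra)); lra.
Qed.

Lemma g_nonincreasing_above u v : x2 a b <= u <= v -> v < 1 -> g v <= g u.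
Proof.
  intros Huv Hv.
  apply nonincreasing_of_deriv with (fun c => - q c / (sqrt_1m c * w c ^ 2)); [lra | |].
  - intros c Hc; apply deriv_g; lra.
  - intros c Hc. apply div_nonpos.
    + apply Rmult_lt_0_compat; [apply sqrt_1m_pos | apply pow_lt, w_pos]; lra.
    + pose proof (q_nonneg_outside c ltac:(lra)); lra.
Qed.

Lemma H_min_at_x2 t : 0 <= t < 1 -> x1 <= t -> H (x2 a b) <= H t.
Proof.
  intros Ht Ht1.
  assert (Hsign : forall c, 0 <= c < 1 ->
            0 < (1 - c * c) * w c) by (intros; apply Rmult_lt_0_compat; [nra | apply w_pos; lra]).
  destruct (Rle_or_lt t (x2 a b)) as [Hle | Hlt].
  - apply nonincreasing_of_deriv with (fun c => q c / ((1 - c * c) * w c)); [lra | |].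
    + intros c Hc; apply deriv_H; lra.
    + intros c Hc. apply div_nonpos; [apply Hsign; lra | apply q_nonpos_between; lra].
  - apply nondecreasing_of_deriv with (fun c => q c / ((1 - c * c) * w c)); [lra | |].
    + intros c Hc; apply deriv_H; lra.
    + intros c Hc. apply div_nonneg; [apply Hsign; lra | apply q_nonneg_outside; lra].
Qed.

(* Near t = 1 the function g becomes arbitrarily close to 0 from below at worst:
   with t = cos s, g t = s - sin s / w t >= - s / (a + b). *)
Lemma g_eventually_ge u e : 0 <= u < 1 -> 0 < e -> exists z, u <= z < 1 /\ - e <= g z.
Proof.
  intros Hu He.
  pose proof (acos_bound_lt u ltac:(lra)) as Hacos.
  set (s := Rmin (acos u) (e * (a + b))).
  assert (Hs0 : 0 < s) by (apply Rmin_pos; nra).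
  assert (Hs1 : s <= acos u) by apply Rmin_l.
  assert (Hs2 : s <= e * (a + b)) by apply Rmin_r.
  exists (cos s).
  assert (Hacos_s : acos (cos s) = s) by (apply acos_cos; lra).
  assert (Hu_le : u <= cos s).
  { rewrite <- (cos_acos u) by lra. apply cos_decr_1; lra. }
  assert (Hlt1 : cos s < 1).
  { destruct (COS_bound s) as [_ Hc]. destruct Hc as [Hc | Hc]; [easy |].
    rewrite Hc, acos_1 in Hacos_s. lra. }
  split; [lra |].
  assert (Hsin : sqrt_1m (cos s) = sin s).
  { rewrite <- Hacos_s at 2. rewrite sin_acos by lra. reflexivity. }
  pose proof (sin_lt_x s Hs0). pose proof (sin_ge_0 s ltac:(lra) ltac:(lra)).
  assert (Hw : a + b <= w (cos s)) by (unfold w; nra).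
  assert (Hquot : sqrt_1m (cos s) / w (cos s) <= e).
  { rewrite Hsin. apply Rle_trans with (s / (a + b)).
    - unfold Rdiv. apply Rmult_le_compat; try lra.
      + left; apply Rinv_0_lt_compat; nra.
      + apply Rinv_le_contravar; nra.
    - apply Rmult_le_reg_r with (a + b); [nra |]. unfold Rdiv.
      rewrite Rmult_assoc, Rinv_l by nra. lra. }
  unfold g. rewrite Hacos_s. lra.
Qed.

(* Since g decreases on [x2, 1) towards 0, it is nonnegative there. *)
Lemma g_nonneg_above t : x2 a b <= t < 1 -> 0 <= g t.
Proof.
  intros Ht. apply Rnot_lt_le. intros Hneg.
  destruct (g_eventually_ge t (- g t / 2) ltac:(lra) ltac:(lra)) as [z [Hz Hgz]].
  pose proof (g_nonincreasing_above t z ltac:(lra) ltac:(lra)). lra.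
Qed.

Lemma exp_H t : -1 < t < 1 -> 0 < w t -> exp (H t) = E t * sqrt_1m t / w t.
Proof.
  intros Ht Hw.
  assert (Hsqrt : sqrt_1m t = exp (/ 2 * ln ((1 + t) * (1 - t)))).
  { unfold sqrt_1m. rewrite <- Rpower_sqrt by nra. unfold Rpower. do 3 f_equal. ring. }
  assert (Hsplit : H t = (b * ln (1 + t) - a * ln (1 - t))
                         + / 2 * ln ((1 + t) * (1 - t)) - ln (w t)).
  { unfold H. rewrite ln_mult by lra. field. }
  rewrite Hsplit, Hsqrt. unfold Rminus at 1.
  rewrite exp_plus, exp_plus, exp_Ropp, exp_ln by lra. unfold E. field. lra.
Qed.

Lemma F_split t : 0 <= t < 1 -> F t = exp (H t) + E t * g t.
Proof.
  intros Ht. rewrite exp_H by (try apply w_pos; lra).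
  unfold F, g. field. apply Rgt_not_eq, w_pos; lra.
Qed.

(* F decreases wherever g <= 0, since F' = E w g / (1 - t^2). *)
Lemma F_nonincreasing u v : 0 <= u <= v -> v < 1 ->
  (forall c, u <= c <= v -> g c <= 0) -> F v <= F u.
Proof.
  intros Huv Hv Hg.
  apply nonincreasing_of_deriv with (fun c => E c * w c * g c / (1 - c * c)); [lra | |].
  - intros c Hc; apply deriv_F; lra.
  - intros c Hc. apply div_nonpos; [nra |].
    assert (0 < E c * w c) by (apply Rmult_lt_0_compat; [apply E_pos | apply w_pos; lra]).
    pose proof (Hg c Hc). nra.
Qed.

(* Where g >= 0 beyond x1, F >= exp H >= exp (H x2). *)
Lemma F_ge_where_g_nonneg t : 0 <= t < 1 -> x1 <= t -> 0 <= g t -> exp (H (x2 a b)) <= F t.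
Proof.
  intros Ht Ht1 Hg. rewrite F_split by lra.
  pose proof (exp_nondecreasing _ _ (H_min_at_x2 t Ht Ht1)).
  pose proof (E_pos t). nra.
Qed.

Hypothesis g0_nonpos : g 0 <= 0.

Lemma g_nonpos_below t : 0 <= t <= x1 -> g t <= 0.
Proof. intros Ht. pose proof (g_nonincreasing_below 0 t ltac:(lra) ltac:(lra)). lra. Qed.

(* If g <= 0 at some l in [x1, x2] beyond x, then g has a zero xs in [l, x2],
   g <= 0 on [x, xs], and F x >= F xs = exp (H xs) >= exp (H x2). *)
Lemma F_ge_via_zero x l : 0 <= x <= l -> x1 <= l <= x2 a b -> g l <= 0 ->
  exp (H (x2 a b)) <= F x.
Proof.
  intros Hxl Hl Hgl.
  destruct (zero_between g l (x2 a b)) as [xs [Hxs Hgxs]].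
  - lra.
  - intros c Hc. apply derivable_continuous_pt. eexists. apply deriv_g. lra.
  - exact Hgl.
  - apply g_nonneg_above. lra.
  - apply Rle_trans with (F xs).
    + apply F_ge_where_g_nonneg; lra.
    + apply F_nonincreasing; [lra | lra |].
      intros c Hc. destruct (Rle_or_lt c x1).
      * apply g_nonpos_below. lra.
      * rewrite <- Hgxs. apply g_nondecreasing_between; lra.
Qed.

Lemma F_lower_bound x : 0 <= x < 1 -> exp (H (x2 a b)) <= F x.
Proof.
  intros Hx. pose proof x1_lt_x2.
  destruct (Rle_or_lt x1 x) as [Hx1 | Hx1].
  - destruct (Rle_or_lt 0 (g x)) as [Hgx | Hgx]; [now apply F_ge_where_g_nonneg |].
    assert (x < x2 a b).
    { apply Rnot_le_lt. intros Hx2. pose proof (g_nonneg_above x). lra. }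
    apply (F_ge_via_zero x x); lra.
  - apply (F_ge_via_zero x x1); [lra | lra | apply g_nonpos_below; lra].
Qed.

End Bound.

Lemma H_as_Rpower a b t : -1 < t < 1 -> 0 < w a b t ->
  Rpower (1 + t) (b + 1 / 2) * Rpower (1 - t) (1 / 2 - a) / (a + b + (a - b) * t)
  = exp (H a b t).
Proof.
  intros Ht Hw.
  replace (H a b t) with ((b + 1 / 2) * ln (1 + t) + (1 / 2 - a) * ln (1 - t) + - ln (w a b t))
    by (unfold H; ring).
  rewrite exp_plus, exp_plus, exp_Ropp, exp_ln by easy.
  unfold Rpower, w in *. field. lra.
Qed.

Lemma E_as_Rpower a b x : -1 < x < 1 -> Rpower (1 - x) a / Rpower (1 + x) b = / E a b x.
Proof.
  intros Hx. unfold Rpower, E.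
  replace (b * ln (1 + x) - a * ln (1 - x)) with (b * ln (1 + x) + - (a * ln (1 - x))) by ring.
  rewrite exp_plus, exp_Ropp.
  field. split; apply Rgt_not_eq, exp_pos.
Qed.

(* g(0) <= 0 is exactly the hypothesis a + b <= 2 / pi. *)
Lemma g_at_0 a b : g a b 0 = PI / 2 - 1 / (a + b).
Proof.
  unfold g, sqrt_1m, w. rewrite acos_0, Rmult_0_r, Rminus_0_r, sqrt_1.
  do 2 f_equal. ring.
Qed.

Theorem theorem2 (a b : R) :
  1 / 3 < a - b -> a - b < 4 / PI ^ 2 ->
  1 / 2 < a -> a <= 2 / PI - b ->
  16 * a * b * (b - a) + (a + b) ^ 2 > 0 ->
  0 < x2 a b < 1 ->
  forall x : R, 0 < x < 1 ->
    acos x >=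
      Rpower (1 + x2 a b) (b + 1 / 2) * Rpower (1 - x2 a b) (1 / 2 - a)
        / (a + b + (a - b) * x2 a b)
      * (Rpower (1 - x) a / Rpower (1 + x) b).
Proof.
  intros Hd1 Hd2 Ha Hab Hdisc Hx2 x Hx.
  pose proof PI2_3_2 as HPI.
  assert (Hb : 0 < b).
  { assert (4 / PI ^ 2 < 1 / 2) by (apply Rmult_lt_reg_r with (2 * PI ^ 2); field_simplify; nra).
    lra. }
  assert (Hg0 : g a b 0 <= 0).
  { assert (Hsum : (a + b) * PI <= 2).
    { replace 2 with (2 / PI * PI) by (field; lra). apply Rmult_le_compat_r; lra. }
    rewrite g_at_0. apply Rle_minus, Rmult_le_reg_r with (2 * (a + b)); [lra |].
    replace (PI / 2 * (2 * (a + b))) with ((a + b) * PI) by field.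
    replace (1 / (a + b) * (2 * (a + b))) with 2 by (field; lra). lra. }
  pose proof (F_lower_bound a b Hb ltac:(lra) Hdisc Hx2 Hg0 x ltac:(lra)) as Hbound.
  rewrite H_as_Rpower, E_as_Rpower by (try apply w_pos; lra).
  unfold F in Hbound. pose proof (E_pos a b x).
  apply Rle_ge, Rmult_le_reg_r with (E a b x); [easy |].
  rewrite Rmult_assoc, Rinv_l by lra. lra.
Qed.
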